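(* Let $\pi$ be an $r$-homogeneous strongly log-concave distribution with associated matroid $\mathcal{M}=(E,\mathcal{I})$ and weight function $w$. If $I\in\mathcal{I}$ and $|I|\le r-2$, then the matrix $W_I$ has at most one positive eigenvalue.
   Context: $\pi:2^{[n]}\to\mathbb{R}_{\ge0}$ has generating polynomial $g_\pi(x)=\sum_S\pi(S)\prod_{i\in S}x_i$; it is $r$-homogeneous if its support consists of $r$-sets; a polynomial with nonnegative coefficients is strongly log-concave if for every $J\subseteq[n]$, $\partial_J p$ has negative semidefinite $\nabla^2\log(\partial_J p)$ at the all-ones vector; $\pi$ is strongly log-concave if $g_\pi$ is. It is known that the support $\mathcal{B}$ of such $\pi$ is the set of bases of a matroid $\mathcal{M}=(E,\mathcal{I})$ of rank $r$ on $E=[n]$ ($\mathcal{I}$ = subsets of bases). Fix a constant $Z_r>0$ and define weights on $\mathcal{I}$ by $w(B)=\pi(B)Z_r$ for $B\in\mathcal{B}$ and $w(I)=\sum_{I'\supset I,\ |I'|=|I|+1,\ I'\in\mathcal{I}}w(I')$ for $|I|<r$; equivalently $w(I)=(r-|I|)!\sum_{B\in\mathcal{B},B\supseteq I}w(B)$, with $w(I)=0$ for dependent $I$. For $I\in\mathcal{I}$ with $|I|\le r-2$, $W_I$ is the matrix indexed by $E\setminus I$ with $(W_I)_{uv}=w(I\cup\{u,v\})$ for $u\ne v$ and $(W_I)_{uu}=0$; equivalently $W_I=(r-|I|-2)!\,Z_r\,\nabla^2\partial_I g_\pi(\mathbf{1})$. *)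

From HB Require Import structures.
From mathcomp Require Import all_boot all_order all_algebra.
From mathcomp Require Import mpoly.
Set Implicit Arguments. Unset Strict Implicit. Unset Printing Implicit Defensive.
Import Order.TTheory GRing.Theory Num.Theory.
Local Open Scope ring_scope.

Section Defs.
Variables (R : realFieldType) (n : nat).

Definition genpoly (pi : {set 'I_n} -> R) : {mpoly R[n]} :=
  \sum_(S : {set 'I_n}) pi S *: \prod_(i in S) 'X_i.

Definition homogeneous_dist (r : nat) (pi : {set 'I_n} -> R) : Prop :=
  forall S, pi S != 0 -> #|S| = r.

Definition partialJ (J : {set 'I_n}) (p : {mpoly R[n]}) : {mpoly R[n]} :=
  foldr (@mderiv n R) p (enum J).

Definition ones : 'I_n -> R := fun _ => 1.

Definition hess_log_at1 (q : {mpoly R[n]}) : 'M[R]_n :=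
  \matrix_(i, j)
    ((q.@[ones] * (mderiv i (mderiv j q)).@[ones]
      - (mderiv i q).@[ones] * (mderiv j q).@[ones]) / (q.@[ones]) ^+ 2).

Definition nsd (m : nat) (A : 'M[R]_m) : Prop :=
  forall v : 'rV[R]_m, (v *m A *m v^T) 0 0 <= 0.

Definition strongly_log_concave (p : {mpoly R[n]}) : Prop :=
  (forall m, 0 <= p@_m) /\
  forall J : {set 'I_n}, nsd (hess_log_at1 (partialJ J p)).

Definition SLC_dist (pi : {set 'I_n} -> R) : Prop :=
  strongly_log_concave (genpoly pi).

Definition is_basis (pi : {set 'I_n} -> R) (B : {set 'I_n}) : bool := pi B != 0.
Definition independent (pi : {set 'I_n} -> R) (I : {set 'I_n}) : Prop :=
  exists2 B, is_basis pi B & I \subset B.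

Definition weight (pi : {set 'I_n} -> R) (r : nat) (Zr : R) (I : {set 'I_n}) : R :=
  (r - #|I|)`!%:R * \sum_(B : {set 'I_n} | is_basis pi B && (I \subset B)) pi B * Zr.

(* W_I, indexed by E \ I (enumerated via enum_val) *)
Definition W_mat (pi : {set 'I_n} -> R) (r : nat) (Zr : R) (I : {set 'I_n})
  : 'M[R]_#|~: I| :=
  \matrix_(u, v)
    (if u == v then 0
     else weight pi r Zr (I :|: [set @enum_val _ (mem (~: I)) u;
                                     @enum_val _ (mem (~: I)) v])).

Definition at_most_pos_eigs (m : nat) (A : 'M[R]_m) (k : nat) : Prop :=
  forall s : seq R, uniq s -> all (fun a => 0 < a) s ->
    (\sum_(a <- s) mup a (char_poly A) <= k)%N.

End Defs.

From HB Require Import structures.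
From mathcomp Require Import all_boot all_order all_algebra.
From mathcomp Require Import mpoly.
From mathcomp Require Import ring lra.
Import Order.TTheory GRing.Theory Num.Theory.
Set Implicit Arguments. Unset Strict Implicit. Unset Printing Implicit Defensive.
Local Open Scope ring_scope.

(* W_I is a positive multiple of the Hessian at the all-ones vector of
   q = d_I g_pi, restricted to E \ I.  Strong log-concavity of q gives
   q(1) Hess q(1) - grad q(1)^T grad q(1) <= 0, so the quadratic form of
   Hess q(1), hence that of W_I, is nonpositive on the hyperplane orthogonal
   to grad q(1).  A symmetric matrix whose form is nonpositive on a hyperplane
   has at most one positive eigenvalue: eigenvectors for two positive
   eigenvalues span a plane on which the form is positive definite, and this
   plane meets the hyperplane; a repeated positive root of the characteristic
   polynomial produces two such eigenvectors, because a symmetric matrix has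
   no nontrivial Jordan block. *)

Section CharPoly.
Variable F : fieldType.

Lemma char_poly_conj m (P Q A : 'M[F]_m) : P *m Q = 1%:M ->
  char_poly (P *m A *m Q) = char_poly A.
Proof.
move=> PQ; rewrite /char_poly; have -> : char_poly_mx (P *m A *m Q) =
    map_mx polyC P *m char_poly_mx A *m map_mx polyC Q.
  rewrite /char_poly_mx !map_mxM mulmxBr mulmxBl mul_mx_scalar -scalemxAl.
  by rewrite -mul_mx_scalar -(map_mxM _ P Q) PQ map_mx1 mul1mx.
by rewrite !det_mulmx mulrAC -det_mulmx -map_mxM PQ map_mx1 det1 mul1r.
Qed.

Lemma char_poly_row_delta m (M : 'M[F]_m) j a :
  row j M = a *: 'e_j ->
  char_poly M = ('X - a%:P) * char_poly (row' j (col' j M)).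
Proof.
move=> rowM; have Mj k : M j k = a * (k == j)%:R.
  by have := congr1 (fun v : 'rV_m => v 0 k) rowM; rewrite !mxE.
rewrite /char_poly (expand_det_row _ j) (bigD1 j) //= big1 ?addr0.
  rewrite /cofactor row'_col'_char_poly_mx addnn -mul2n exprM sqrrN !expr1n.
  by rewrite mul1r !mxE Mj !eqxx mulr1 mulr1n.
move=> k kj; rewrite !mxE Mj (negbTE kj) eq_sym (negbTE kj).
by rewrite mulr0 mulr0n subrr mul0r.
Qed.

Lemma eigenvalue_deflate m (M : 'M[F]_m) j a :
  eigenvalue (row' j (col' j M)) a ->
  exists (x : 'rV_m) z, [/\ x != 0, x 0 j = 0 & x *m M = a *: x + z *: 'e_j].
Proof.
case/eigenvalueP => w wB w0.
pose x : 'rV_m := \row_i oapp (w 0) 0 (unlift j i).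
have xj : x 0 j = 0 by rewrite mxE unlift_none.
have x_lift l : x 0 (lift j l) = w 0 l by rewrite mxE liftK.
exists x, ((x *m M) 0 j); split=> //.
  by apply: contra_neq w0 => x0; apply/rowP => l; rewrite -x_lift x0 !mxE.
apply/rowP => k; rewrite !mxE; case: (unliftP j k) => [l ->|->].
  rewrite (bigD1_ord j) //= xj mul0r add0r eq_sym (negbTE (neq_lift _ _)) mulr0 addr0.
  have := congr1 (fun v : 'rV_m.-1 => v 0 l) wB; rewrite !mxE => <-.
  by apply: eq_bigr => l' _; rewrite x_lift !mxE.
by rewrite /= mulr0 add0r !eqxx mulr1.
Qed.

Lemma mup_char_poly_gt0 m (A : 'M[F]_m) a :
  (0 < mup a (char_poly A))%N = eigenvalue A a.
Proof.
rewrite -XsubC_dvd ?monic_neq0 ?char_poly_monic //.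
by rewrite dvdp_XsubCl eigenvalue_root_char.
Qed.

End CharPoly.

Section RealSymmetric.
Variable R : realFieldType.

Definition dot m (u v : 'rV[R]_m) : R := (u *m v^T) 0 0.

Lemma dotC m (u v : 'rV[R]_m) : dot u v = dot v u.
Proof. by rewrite /dot !mxE; apply: eq_bigr => i _; rewrite !mxE mulrC. Qed.

Lemma dotZl m k (u w : 'rV[R]_m) : dot (k *: u) w = k * dot u w.
Proof. by rewrite /dot -scalemxAl mxE. Qed.

Lemma dotBl m (u v w : 'rV[R]_m) : dot (u - v) w = dot u w - dot v w.
Proof. by rewrite /dot mulmxBl !mxE. Qed.

Lemma dotZr m k (u w : 'rV[R]_m) : dot w (k *: u) = k * dot w u.
Proof. by rewrite !(dotC w) dotZl. Qed.

Lemma dotBr m (u v w : 'rV[R]_m) : dot w (u - v) = dot w u - dot w v.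
Proof. by rewrite !(dotC w) dotBl. Qed.

Lemma dot_mulmxl m n (u : 'rV[R]_m) (B : 'M_(m, n)) v :
  dot (u *m B) v = dot u (v *m B^T).
Proof. by rewrite /dot trmx_mul trmxK mulmxA. Qed.

Lemma dotvv_ge0 m (u : 'rV[R]_m) : 0 <= dot u u.
Proof. by rewrite /dot mxE sumr_ge0 // => i _; rewrite mxE -expr2 sqr_ge0. Qed.

Lemma dotvv_eq0 m (u : 'rV[R]_m) : (dot u u == 0) = (u == 0).
Proof.
apply/idP/eqP => [|->]; last by rewrite /dot mul0mx mxE.
rewrite /dot mxE psumr_eq0 => [/allP u0|i _]; last by rewrite mxE -expr2 sqr_ge0.
apply/rowP => i; have := u0 i (mem_index_enum i).
by rewrite mxE -expr2 sqrf_eq0 mxE => /eqP.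
Qed.

Lemma dotvv_gt0 m (u : 'rV[R]_m) : u != 0 -> 0 < dot u u.
Proof. by rewrite lt_def dotvv_eq0 dotvv_ge0 andbT. Qed.

Section Symmetric.
Variables (m : nat) (A : 'M[R]_m).
Hypothesis symA : A^T = A.

Lemma sym_eigvec_dot_eq0 a b (u v : 'rV_m) : a != b ->
  u *m A = a *: u -> v *m A = b *: v -> dot u v = 0.
Proof.
move=> ab uA vA; have : a * dot u v = b * dot u v.
  by rewrite -dotZl -uA dot_mulmxl symA vA dotZr.
by move/eqP; rewrite -subr_eq0 -mulrBl mulf_eq0 subr_eq0 (negbTE ab) => /eqP.
Qed.

Lemma sym_double_eigenvalue a (u : 'rV_m) j :
  u *m A = a *: u -> u 0 j != 0 -> ('X - a%:P) ^+ 2 %| char_poly A ->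
  exists x : 'rV_m, [/\ x *m A = a *: x, x != 0 & x 0 j = 0].
Proof.
move=> uA uj dvd2; wlog uj1 : u uA uj / u 0 j = 1.
  move=> normalize; apply: (normalize ((u 0 j)^-1 *: u)).
  - by rewrite -scalemxAl uA !scalerA mulrC.
  - by rewrite mxE mulVf ?oner_eq0.
  - by rewrite mxE mulVf.
pose e : 'rV[R]_m := 'e_j; pose E := e^T *m (u - e).
have xE (x : 'rV_m) : x *m E = x 0 j *: (u - e).
  by rewrite mulmxA trmx_delta -colE [col j x]mx11_scalar mul_scalar_mx mxE.
have ej1 : e 0 j = 1 by rewrite /e mxE !eqxx.
have EE : E *m E = 0.
  by rewrite {1}/E -mulmxA xE !mxE uj1 !eqxx subrr scale0r mulmx0.
(* The shear P maps e_j to u and fixes every x with x_j = 0, so row j of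
   P A P^-1 is a e_j and the characteristic polynomial deflates. *)
pose P := 1%:M + E; pose Q := 1%:M - E.
have PQ : P *m Q = 1%:M by rewrite mulmxDl !mul1mx mulmxBr mulmx1 EE subr0 subrK.
have eP : e *m P = u by rewrite mulmxDr mulmx1 xE ej1 scale1r addrC subrK.
have xP (x : 'rV_m) : x 0 j = 0 -> x *m P = x.
  by rewrite mulmxDr mulmx1 xE => ->; rewrite scale0r addr0.
pose M := P *m A *m Q.
have rowM : row j M = a *: e.
  by rewrite rowE -/e !mulmxA eP uA -scalemxAl -eP -mulmxA PQ mulmx1.
have [x [z [x0 xj xM]]] :
    exists (x : 'rV_m) z, [/\ x != 0, x 0 j = 0 & x *m M = a *: x + z *: e].
  apply: eigenvalue_deflate; rewrite eigenvalue_root_char -dvdp_XsubCl.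
  rewrite -(@dvdp_mul2l _ ('X - a%:P)) ?polyXsubC_eq0 // -expr2.
  by rewrite -(char_poly_row_delta rowM) char_poly_conj.
have xA : x *m A = a *: x + z *: u.
  have MP : M *m P = P *m A by rewrite -mulmxA (mulmx1C PQ) mulmx1.
  by rewrite -{1}(xP x xj) -mulmxA -MP mulmxA xM mulmxDl -!scalemxAl eP xP.
have zu0 : z *: u = 0.
  have zuA : (z *: u) *m A = a *: (z *: u) by rewrite -scalemxAl uA !scalerA mulrC.
  have zuE : z *: u = x *m A - a *: x by rewrite xA addrAC subrr add0r.
  apply/eqP; rewrite -dotvv_eq0 {1}zuE dotBl dot_mulmxl symA zuA dotZr.
  by rewrite dotZl subrr.
by exists x; rewrite xA zu0 addr0.
Qed.

Variable c : 'rV[R]_m.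
Hypothesis nonpos_on_perp : forall v, dot v c = 0 -> dot (v *m A) v <= 0.

Lemma pos_eigvec_dot_neq0 a (u : 'rV_m) :
  0 < a -> u *m A = a *: u -> u != 0 -> dot u c != 0.
Proof.
move=> a0 uA; apply: contra => /eqP/nonpos_on_perp.
by rewrite uA dotZl pmulr_rle0 // => uu; rewrite -dotvv_eq0 eq_le uu dotvv_ge0.
Qed.

Lemma pos_eigvecs_collinear a (u v : 'rV_m) : 0 < a ->
  u *m A = a *: u -> v *m A = a *: v -> u != 0 -> v = (dot v c / dot u c) *: u.
Proof.
move=> a0 uA vA u0; have uc := pos_eigvec_dot_neq0 a0 uA u0.
pose x := dot v c *: u - dot u c *: v.
have xA : x *m A = a *: x.
  by rewrite mulmxBl -!scalemxAl uA vA !scalerA scalerBr !scalerA (mulrC a) (mulrC a).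
have xc : dot x c = 0 by rewrite dotBl !dotZl mulrC subrr.
have /eqP : x = 0.
  by apply/eqP/negPn/negP => /(pos_eigvec_dot_neq0 a0 xA); rewrite xc eqxx.
by rewrite subr_eq0 mulrC -scalerA => /eqP->; rewrite scalerA mulVf ?scale1r.
Qed.

Lemma pos_eigenvalues_eq a b (u v : 'rV_m) : 0 < a -> 0 < b ->
  u *m A = a *: u -> v *m A = b *: v -> u != 0 -> v != 0 -> a = b.
Proof.
move=> a0 b0 uA vA u0 v0; apply/eqP/negPn/negP => ab.
have uv := sym_eigvec_dot_eq0 ab uA vA.
pose x := dot v c *: u - dot u c *: v.
have := nonpos_on_perp (v := x); rewrite dotBl !dotZl mulrC subrr => /(_ erefl).
rewrite mulmxBl -!scalemxAl uA vA !(dotBl, dotBr, dotZl, dotZr) uv (dotC v u) uv.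
rewrite !mulr0 !subr0 sub0r opprK.
have vc2 : 0 < dot v c ^+ 2.
  by rewrite lt_def sqr_ge0 sqrf_eq0 andbT (pos_eigvec_dot_neq0 b0 vA).
have uc2 := sqr_ge0 (dot u c).
have := mulr_gt0 vc2 (mulr_gt0 a0 (dotvv_gt0 u0)).
have := mulr_ge0 uc2 (mulr_ge0 (ltW b0) (dotvv_ge0 v)).
rewrite !expr2; lra.
Qed.

Lemma mup_pos_eigenvalue_le1 a : 0 < a -> (mup a (char_poly A) <= 1)%N.
Proof.
move=> a0; have cpA0 : char_poly A != 0 := monic_neq0 (char_poly_monic A).
rewrite mup_leq //; apply/negP => dvd2.
have /eigenvalueP [u uA u0] : eigenvalue A a.
  rewrite -mup_char_poly_gt0 mup_geq //.
  by rewrite (dvdp_trans _ dvd2) // dvdp_exp2l.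
have [j uj] : exists j, u 0 j != 0.
  move: u0; rewrite matrix_eq0 => /forallPn [i /forallPn [j]].
  by rewrite ord1; exists j.
have [x [xA x0 xj]] := sym_double_eigenvalue uA uj dvd2.
move: xj x0; rewrite (pos_eigvecs_collinear a0 uA xA u0) mxE.
by move/eqP; rewrite mulf_eq0 (negbTE uj) orbF => /eqP->; rewrite scale0r eqxx.
Qed.

Lemma nonpos_on_hyperplane_pos_eigs : at_most_pos_eigs A 1.
Proof.
move=> s s_uniq /allP s_pos.
have [/hasP [a sa mup_a]|/hasPn mup0] :=
  boolP (has (fun a => 0 < mup a (char_poly A))%N s).
  rewrite (bigD1_seq a) //= big1_seq ?addn0 ?mup_pos_eigenvalue_le1 ?s_pos //.
  move=> b /andP [ba sb]; apply/eqP; rewrite -leqn0 leqNgt mup_char_poly_gt0.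
  apply/negP => /eigenvalueP [v vA v0].
  move: mup_a; rewrite mup_char_poly_gt0 => /eigenvalueP [u uA u0].
  by rewrite (pos_eigenvalues_eq (s_pos a sa) (s_pos b sb) uA vA u0 v0) eqxx in ba.
by rewrite big1_seq // => a /andP [_ /mup0]; rewrite lt0n negbK => /eqP.
Qed.

End Symmetric.
End RealSymmetric.

Section SquarefreeMonomials.
Variables (R : realFieldType) (n : nat).

Definition monom (S : {set 'I_n}) : {mpoly R[n]} := \prod_(k in S) 'X_k.

Lemma mderivXU (i k : 'I_n) : mderiv i ('X_k : {mpoly R[n]}) = (k == i)%:R.
Proof.
rewrite mderivX mnm1E; case: eqP => [->|_]; last by rewrite scale0r.
rewrite scale1r (_ : (U_(i) - U_(i))%MM = 0%MM) ?mpolyX0 //.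
by apply/mnmP=> l; rewrite !mnmE subnn.
Qed.

Lemma mderiv_monom i S :
  mderiv i (monom S) = if i \in S then monom (S :\ i) else 0.
Proof.
have mderiv_notin (T : {set 'I_n}) : i \notin T -> mderiv i (monom T) = 0.
  move=> iT; apply: (big_ind (fun p => mderiv i p = 0)) => [|p p' dp dp'|k kT].
  - by rewrite -mpolyC1 mderivC.
  - by rewrite mderivM dp dp' mul0r mulr0 addr0.
  by rewrite mderivXU; case: eqP kT iT => // ->->.
case: ifPn => iS; last exact: mderiv_notin.
rewrite /monom (big_setD1 i iS) /= mderivM mderivXU eqxx mul1r.
by rewrite mderiv_notin ?setD11 // mulr0 addr0.
Qed.

Lemma monom_at1 S : (monom S).@[@ones R n] = 1.
Proof. by rewrite rmorph_prod big1 // => k _; rewrite /= mevalXU. Qed.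

Lemma partialJ_monom J S :
  partialJ J (monom S) = if J \subset S then monom (S :\: J) else 0.
Proof.
rewrite /partialJ -{2 3}(set_enum J); elim: (enum J) (enum_uniq J) => [|x s IH] /=.
  by move=> _; rewrite sub0set; congr monom; apply/setP => k; rewrite !inE.
case/andP => xs /IH ->; rewrite set_cons subUset sub1set.
case: ifPn => sS; last by rewrite andbF linear0.
rewrite mderiv_monom !inE (negbTE xs) /= andbT.
case: ifPn => // xS; congr monom; apply/setP => k; rewrite !inE.
by case: eqVneq => [->|].
Qed.

Section MonomialSums.
Variables (T : finType) (c : T -> R).

Lemma partialJ_sum J (p : T -> {mpoly R[n]}) :
  partialJ J (\sum_t c t *: p t) = \sum_t c t *: partialJ J (p t).
Proof.
rewrite /partialJ; elim: (enum J) => //= j s ->.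
by rewrite linear_sum; apply: eq_bigr => t _; rewrite linearZ.
Qed.

Lemma mderiv_sum_monom i (f : T -> {set 'I_n}) :
  mderiv i (\sum_t c t *: monom (f t)) =
  \sum_t (if i \in f t then c t else 0) *: monom (f t :\ i).
Proof.
rewrite linear_sum; apply: eq_bigr => t _; rewrite linearZ /= mderiv_monom.
by case: ifP; rewrite ?scaler0 ?scale0r.
Qed.

Lemma sum_monom_at1 (f : T -> {set 'I_n}) :
  (\sum_t c t *: monom (f t)).@[@ones R n] = \sum_t c t.
Proof.
by rewrite raddf_sum; apply: eq_bigr => t _; rewrite /= mevalZ monom_at1 mulr1.
Qed.

End MonomialSums.

Lemma partialJ_genpoly (pi : {set 'I_n} -> R) J :
  partialJ J (genpoly pi) =
  \sum_(S : {set 'I_n}) (if J \subset S then pi S else 0) *: monom (S :\: J).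
Proof.
rewrite partialJ_sum; apply: eq_bigr => S _; rewrite partialJ_monom.
by case: ifP; rewrite ?scaler0 ?scale0r.
Qed.

End SquarefreeMonomials.

Section HessianAtOnes.
Variables (R : realFieldType) (n : nat).
Implicit Type q : {mpoly R[n]}.

Definition grad_at1 q : 'rV[R]_n := \row_i (mderiv i q).@[@ones R n].

Definition hess_at1 q : 'M[R]_n :=
  \matrix_(i, j) (mderiv i (mderiv j q)).@[@ones R n].

Lemma hess_at1_sym q : (hess_at1 q)^T = hess_at1 q.
Proof. by apply/matrixP => i j; rewrite !mxE mderiv_comm. Qed.

Lemma hess_log_at1E q :
  hess_log_at1 q = (q.@[@ones R n])^-1 *: hess_at1 q
                   - (q.@[@ones R n] ^+ 2)^-1 *: ((grad_at1 q)^T *m grad_at1 q).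
Proof.
apply/matrixP => i j; rewrite !mxE big_ord1 !mxE.
have [->|q1] := eqVneq q.@[@ones R n] 0.
  by rewrite expr0n /= invr0 !mulr0 !mul0r subrr.
by field; rewrite q1.
Qed.

Lemma hess_at1_nonpos_perp q (v : 'rV_n) :
  0 < q.@[@ones R n] -> nsd (hess_log_at1 q) -> dot v (grad_at1 q) = 0 ->
  dot (v *m hess_at1 q) v <= 0.
Proof.
move=> q1 nsd_q vG; have := nsd_q v; rewrite hess_log_at1E.
have vG0 : v *m (grad_at1 q)^T = 0.
  by apply/matrixP => i k; rewrite !ord1 [RHS]mxE; exact: vG.
rewrite -[(_ *m _ *m _) 0 0]/(dot _ v) mulmxBr -!scalemxAr dotBl !dotZl.
rewrite mulmxA vG0 mul0mx [dot 0 _]/dot mul0mx mxE mulr0 subr0.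
by rewrite pmulr_rle0 ?invr_gt0.
Qed.

End HessianAtOnes.

Lemma mxsub_nonpos_perp (R : realFieldType) m n (f : 'I_m -> 'I_n)
    (B : 'M[R]_n) (g : 'rV_n) :
  (forall w, dot w g = 0 -> dot (w *m B) w <= 0) ->
  forall v, dot v (colsub f g) = 0 -> dot (v *m mxsub f f B) v <= 0.
Proof.
move=> B_nonpos v vg; pose S : 'M[R]_(m, n) := rowsub f 1%:M.
have ST : S^T = colsub f 1%:M by rewrite trmx_mxsub trmx1.
have -> : mxsub f f B = S *m B *m S^T.
  by rewrite ST mulmx_colsub mulmx1 mul_rowsub_mx mul1mx mxsubcr.
rewrite !mulmxA dot_mulmxl trmxK; apply: B_nonpos.
by rewrite dot_mulmxl ST mulmx_colsub mulmx1.
Qed.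

Section GeneratingPolynomial.
Variables (R : realFieldType) (n : nat) (pi : {set 'I_n} -> R).

Lemma partialJ_genpoly_at1 J :
  (partialJ J (genpoly pi)).@[@ones R n] =
  \sum_(S : {set 'I_n} | J \subset S) pi S.
Proof. by rewrite partialJ_genpoly sum_monom_at1 -big_mkcond. Qed.

Lemma hess_at1_partialJ_genpoly J i j :
  hess_at1 (partialJ J (genpoly pi)) i j =
  \sum_(S : {set 'I_n} | [&& J \subset S, j \in S :\: J & i \in S :\: J :\ j]) pi S.
Proof.
rewrite mxE partialJ_genpoly !mderiv_sum_monom sum_monom_at1 [RHS]big_mkcond.
by apply: eq_bigr => S _; case: (J \subset S); case: (j \in _); case: (i \in _).
Qed.

Lemma hess_at1_partialJ_genpoly_diag J i :
  hess_at1 (partialJ J (genpoly pi)) i i = 0.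
Proof.
by rewrite hess_at1_partialJ_genpoly big_pred0 // => S; rewrite !inE eqxx !andbF.
Qed.

Lemma hess_at1_partialJ_genpoly_offdiag (J : {set 'I_n}) i j :
  i \notin J -> j \notin J -> i != j ->
  hess_at1 (partialJ J (genpoly pi)) i j =
  \sum_(S : {set 'I_n} | J :|: [set i; j] \subset S) pi S.
Proof.
move=> iJ jJ ij; rewrite hess_at1_partialJ_genpoly; apply: eq_bigl => S.
rewrite !subUset !sub1set !inE iJ jJ ij /=.
by case: (J \subset S); case: (i \in S); case: (j \in S).
Qed.

Lemma weightE r Zr T :
  weight pi r Zr T =
  (r - #|T|)`!%:R * Zr * \sum_(S : {set 'I_n} | T \subset S) pi S.
Proof.
rewrite /weight -mulr_suml big_mkcondl (eq_bigr pi) => [|S _]; last first.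
  by rewrite /is_basis; case: eqP => [->|].
by rewrite mulrA mulrAC.
Qed.

Lemma W_matE r Zr I :
  W_mat pi r Zr I =
  ((r - #|I| - 2)`!%:R * Zr) *:
    mxsub enum_val enum_val (hess_at1 (partialJ I (genpoly pi))).
Proof.
apply/matrixP => u v; rewrite [LHS]mxE [RHS]mxE [X in _ * X]mxE.
have [->|uv] := eqVneq u v; first by rewrite hess_at1_partialJ_genpoly_diag mulr0.
have := enum_valP u; have := enum_valP v; rewrite !inE => vI uI.
have uv' : enum_val u != enum_val v by apply: contra uv => /eqP/enum_val_inj ->.
rewrite weightE hess_at1_partialJ_genpoly_offdiag // setUCA [I :|: _]setUC.
by rewrite !cardsU1 !inE negb_or uv' uI vI /= addnA addnC subnDA.
Qed.

Hypothesis pi_ge0 : forall S, 0 <= pi S.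

Lemma partialJ_genpoly_hess_nonpos_perp J v :
  SLC_dist pi -> dot v (grad_at1 (partialJ J (genpoly pi))) = 0 ->
  dot (v *m hess_at1 (partialJ J (genpoly pi))) v <= 0.
Proof.
(* If q(1) = 0 the log-Hessian is the junk value 0, but then q = 0 as pi >= 0. *)
move=> [_ slc]; have := partialJ_genpoly_at1 J.
set q := partialJ J (genpoly pi) => q1 vg.
have : 0 <= q.@[@ones R n] by rewrite q1 sumr_ge0.
rewrite le_eqVlt => /orP [/eqP/esym q1_0|q1_gt0].
  2: exact: hess_at1_nonpos_perp q1_gt0 (slc J) vg.
have q0 : q = 0.
  move: q1_0; rewrite q1 => /eqP; rewrite psumr_eq0 // => /allP pi0.
  rewrite /q partialJ_genpoly big1 // => S _; case: ifP => JS; last by rewrite scale0r.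
  by rewrite (eqP (implyP (pi0 S (mem_index_enum S)) JS)) scale0r.
have -> : hess_at1 q = 0 by apply/matrixP => i j; rewrite !mxE q0 !linear0.
by rewrite mulmx0 /dot mul0mx mxE.
Qed.

End GeneratingPolynomial.

Theorem proposition2p3 (R : realFieldType) (n r : nat)
    (pi : {set 'I_n} -> R) (Zr : R) (I : {set 'I_n}) :
  (forall S, 0 <= pi S) ->
  homogeneous_dist r pi ->
  SLC_dist pi ->
  0 < Zr ->
  independent pi I ->
  (#|I| + 2 <= r)%N ->
  at_most_pos_eigs (W_mat pi r Zr I) 1.
Proof.
move=> pi_ge0 _ slc Zr_gt0 _ _; rewrite W_matE.
set q := partialJ I (genpoly pi).
apply: (@nonpos_on_hyperplane_pos_eigs _ _ _ _ (colsub enum_val (grad_at1 q))).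
  by rewrite linearZ /= trmx_mxsub hess_at1_sym.
move=> v vc; rewrite -scalemxAr dotZl; apply: mulr_ge0_le0.
  by rewrite mulr_ge0 ?ler0n ?ltW.
apply: mxsub_nonpos_perp vc => w; exact: partialJ_genpoly_hess_nonpos_perp.
Qed.
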